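(* Let $0=x_1<\dots<x_N=1$ be a partition of $I=[0,1]$, let $\{q_n\}$ be a sequence in $(0,1]$ with $\lim q_n=1$, and let $\alpha_i$, $i\in\mathbb{N}_{N-1}$, be bounded functions on $I$ with $\|\alpha_i\|_\infty<1$. If $S=\{f_s:s\in\mathbb{N}\}\subset C[0,1]$ is dense in $C[0,1]$ (sup-norm), then \[ \bigcup_{n=1}^\infty\operatorname{span}\{\mathcal{F}^{(q_n,\alpha)}_n(f_s):s\in\mathbb{N}\} \] is also dense in $C[0,1]$.
   Context: For $q\in(0,1]$: $[k]_q=\frac{1-q^k}{1-q}$ ($q\ne1$), $[k]_1=k$, $q$-factorials, $\binom{n}{k}_q=\frac{[n]_q!}{[k]_q![n-k]_q!}$. On $[0,1]$ the quantum MKZ operator is $M_{n,q}h(x)=\prod_{j=0}^n(1-q^jx)\sum_{k\ge0}\binom{n+k}{k}_q x^k h\!\left(\frac{[k]_q}{[k+n]_q}\right)$ for $0\le x<1$, $M_{n,q}h(1)=h(1)$. Let $u_i(x)=a_ix+b_i$ be the affine maps with $u_i(0)=x_i$, $u_i(1)=x_{i+1}$, $i\in\mathbb{N}_{N-1}$. For $h\in C[0,1]$, $\mathcal{F}^{(q,\alpha)}_n(h)$ denotes the unique bounded function $G:[0,1]\to\mathbb{R}$ with $G(u_i(x))=h(u_i(x))+\alpha_i(x)(G(x)-M_{n,q}h(x))$ for all $x\in I$, $i\in\mathbb{N}_{N-1}$. *)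

From Stdlib Require Import Reals Lra Lia ClassicalEpsilon.
From Coquelicot Require Import Coquelicot.
Open Scope R_scope.

Definition qint (q : R) (k : nat) : R :=
  if Req_EM_T q 1 then INR k else (1 - q ^ k) / (1 - q).

Fixpoint qfact (q : R) (n : nat) : R :=
  match n with
  | O => 1
  | S m => qfact q m * qint q (S m)
  end.

Definition qbinom (q : R) (n k : nat) : R :=
  qfact q n / (qfact q k * qfact q (n - k)).

Fixpoint qprod (q x : R) (n : nat) : R :=
  match n with
  | O => 1 - x
  | S m => qprod q x m * (1 - q ^ (S m) * x)
  end.

Definition MKZ (n : nat) (q : R) (h : R -> R) (x : R) : R :=
  if Rlt_dec x 1 then
    qprod q x n *
    Series (fun k => qbinom q (n + k) k * x ^ k * h (qint q k / qint q (k + n)))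
  else h 1.

Definition inI (t : R) : Prop := 0 <= t <= 1.

Definition uaff (xs : nat -> R) (i : nat) (t : R) : R :=
  xs i + (xs (S i) - xs i) * t.

Definition is_fractal (N : nat) (xs : nat -> R) (alpha : nat -> R -> R)
  (q : R) (n : nat) (h G : R -> R) : Prop :=
  (exists B, forall t, inI t -> Rabs (G t) <= B) /\
  (forall i t, (1 <= i <= N - 1)%nat -> inI t ->
     G (uaff xs i t) = h (uaff xs i t) + alpha i t * (G t - MKZ n q h t)).

(* F^{(q,alpha)}_n(h): the (unique) bounded function with the equation *)
Definition fractal (N : nat) (xs : nat -> R) (alpha : nat -> R -> R)
  (q : R) (n : nat) (h : R -> R) : R -> R :=
  epsilon (inhabits (fun _ : R => 0)) (is_fractal N xs alpha q n h).

(* continuity on I = [0,1] (relative topology), i.e. h in C[0,1] *)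
Definition cont_on_I (h : R -> R) : Prop :=
  forall t, inI t -> forall eps, 0 < eps -> exists delta, 0 < delta /\
    forall y, inI y -> Rabs (y - t) < delta -> Rabs (h y - h t) < eps.

(* The fractal function F = F^{(q,alpha)}_n(h) is the fixed point of the Read-Bajraktarevic
   operator T g (u_i t) = h (u_i t) + alpha_i t * (g t - M_{n,q} h t), a contraction of ratio
   c = max_i |alpha_i|_oo < 1, so every bounded solution satisfies
   |F - h|_oo <= c |h - M_{n,q} h|_oo / (1 - c).
   The MKZ operator is positive, reproduces constants and has second central moment at most
   x / [n]_q, hence |h - M_{n,q} h|_oo <= eps + K / [n]_q for continuous h; and q_n -> 1 forces
   [n]_{q_n} -> oo.  Approximating g by some f_s, and f_s by its own fractal function
   F^{(q_n,alpha)}_n(f_s), shows that single elements of the spans are already dense. *)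

From Stdlib Require Import Reals Lra Lia ClassicalEpsilon.
From Coquelicot Require Import Coquelicot.
Open Scope R_scope.

Lemma qint_0 (q : R) : qint q 0 = 0.
Proof. unfold qint; destruct (Req_EM_T q 1); simpl; [reflexivity | field; lra]. Qed.

Lemma qint_S (q : R) (k : nat) : qint q (S k) = qint q k + q ^ k.
Proof.
  unfold qint; destruct (Req_EM_T q 1) as [-> | Hq].
  - rewrite S_INR, pow1; ring.
  - simpl; field; intros H; apply Hq; lra.
Qed.

Lemma qint_add (q : R) (a b : nat) : qint q (a + b) = qint q a + q ^ a * qint q b.
Proof.
  induction b as [|b IH].
  - rewrite Nat.add_0_r, qint_0; ring.
  - rewrite Nat.add_succ_r, !qint_S, IH, pow_add; ring.
Qed.

Lemma qint_nonneg (q : R) (k : nat) : 0 < q -> 0 <= qint q k.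
Proof.
  intros Hq; induction k as [|k IH].
  - rewrite qint_0; lra.
  - rewrite qint_S; pose proof (pow_lt q k Hq); lra.
Qed.

Lemma qint_pos (q : R) (k : nat) : 0 < q -> (1 <= k)%nat -> 0 < qint q k.
Proof.
  intros Hq Hk; destruct k as [|k]; [lia |].
  rewrite qint_S; pose proof (qint_nonneg q k Hq); pose proof (pow_lt q k Hq); lra.
Qed.

Lemma qint_le_add (q : R) (a b : nat) : 0 < q -> qint q a <= qint q (a + b).
Proof.
  intros Hq; rewrite qint_add.
  pose proof (pow_lt q a Hq); pose proof (qint_nonneg q b Hq); nra.
Qed.

Lemma pow_le_one (q : R) (k : nat) : 0 <= q <= 1 -> q ^ k <= 1.
Proof. intros Hq; rewrite <- (pow1 k); apply pow_incr; lra. Qed.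

Lemma qfact_pos (q : R) (k : nat) : 0 < q -> 0 < qfact q k.
Proof.
  intros Hq; induction k as [|k IH]; simpl; [lra |].
  apply Rmult_lt_0_compat; [exact IH | apply qint_pos; [exact Hq | lia]].
Qed.

Lemma qbinom_add (q : R) (n k : nat) :
  qbinom q (n + k) k = qfact q (n + k) / (qfact q k * qfact q n).
Proof. unfold qbinom; now replace (n + k - k)%nat with n by lia. Qed.

Lemma qbinom_add_pos (q : R) (n k : nat) : 0 < q -> 0 < qbinom q (n + k) k.
Proof.
  intros Hq; rewrite qbinom_add.
  pose proof (qfact_pos q (n + k) Hq); pose proof (qfact_pos q k Hq);
    pose proof (qfact_pos q n Hq).
  apply Rdiv_lt_0_compat; [lra | apply Rmult_lt_0_compat; lra].
Qed.

Lemma qbinom_0_add (q : R) (k : nat) : 0 < q -> qbinom q (0 + k) k = 1.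
Proof.
  intros Hq; rewrite qbinom_add; simpl.
  pose proof (qfact_pos q k Hq); field; lra.
Qed.

Lemma qbinom_add_0 (q : R) (n : nat) : 0 < q -> qbinom q (n + 0) 0 = 1.
Proof.
  intros Hq; rewrite qbinom_add, Nat.add_0_r; simpl.
  pose proof (qfact_pos q n Hq); field; lra.
Qed.

Lemma qbinom_pascal (q : R) (n k : nat) : 0 < q ->
  qbinom q (S n + S k) (S k)
  = q ^ S n * qbinom q (S n + k) k + qbinom q (n + S k) (S k).
Proof.
  intros Hq; rewrite !qbinom_add.
  replace (S n + S k)%nat with (S (S n + k)) by lia.
  replace (n + S k)%nat with (S n + k)%nat by lia.
  change (qfact q (S ?m)) with (qfact q m * qint q (S m)).
  replace (S (S n + k)) with (S n + S k)%nat by lia.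
  rewrite (qint_add q (S n) (S k)).
  pose proof (qfact_pos q (S n + k) Hq); pose proof (qfact_pos q k Hq);
    pose proof (qfact_pos q n Hq).
  pose proof (qint_pos q (S k) Hq ltac:(lia)); pose proof (qint_pos q (S n) Hq ltac:(lia)).
  field; repeat split; lra.
Qed.

Definition mkz_weight (q x : R) (n k : nat) : R := qbinom q (n + k) k * x ^ k.

Definition mkz_node (q : R) (n k : nat) : R := qint q k / qint q (k + n).

Lemma MKZ_lt_1 (n : nat) (q : R) (h : R -> R) (x : R) : x < 1 ->
  MKZ n q h x
  = qprod q x n * Series (fun k => mkz_weight q x n k * h (mkz_node q n k)).
Proof. intros Hx; unfold MKZ; destruct (Rlt_dec x 1); [reflexivity | lra]. Qed.

Lemma MKZ_1 (n : nat) (q : R) (h : R -> R) : MKZ n q h 1 = h 1.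
Proof. unfold MKZ; destruct (Rlt_dec 1 1); [lra | reflexivity]. Qed.

Lemma mkz_node_0 (q : R) (n : nat) : mkz_node q n 0 = 0.
Proof. unfold mkz_node; rewrite qint_0; unfold Rdiv; ring. Qed.

Lemma mkz_node_in_I (q : R) (n k : nat) : 0 < q -> inI (mkz_node q n k).
Proof.
  intros Hq; destruct k as [|k]; [rewrite mkz_node_0; unfold inI; lra |].
  pose proof (qint_pos q (S k) Hq ltac:(lia)); pose proof (qint_le_add q (S k) n Hq).
  unfold mkz_node, inI; split.
  - apply Rdiv_le_0_compat; lra.
  - apply Rle_div_l; lra.
Qed.

Lemma mkz_weight_node (q x : R) (n k : nat) : 0 < q ->
  mkz_weight q x n (S k) * mkz_node q n (S k) = x * mkz_weight q x n k.
Proof.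
  intros Hq; unfold mkz_node, mkz_weight; rewrite !qbinom_add.
  replace (n + S k)%nat with (S (n + k)) by lia.
  replace (S k + n)%nat with (S (n + k)) by lia.
  change (qfact q (S ?m)) with (qfact q m * qint q (S m)).
  pose proof (qfact_pos q (n + k) Hq); pose proof (qfact_pos q k Hq);
    pose proof (qfact_pos q n Hq).
  pose proof (qint_pos q (S k) Hq ltac:(lia)); pose proof (qint_pos q (S (n + k)) Hq ltac:(lia)).
  simpl pow; field; repeat split; lra.
Qed.

Lemma mkz_node_S_le (q : R) (n k : nat) : 0 < q <= 1 -> (1 <= n)%nat ->
  mkz_node q n (S k) <= mkz_node q n k + / qint q n.
Proof.
  intros Hq Hn; unfold mkz_node.
  set (e := qint q n); set (a := qint q k); set (A := qint q (k + n)).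
  assert (HSk : qint q (S k) = a + q ^ k) by apply qint_S.
  assert (HSkn : qint q (S k + n) = A + q ^ k * q ^ n) by (rewrite <- pow_add; apply qint_S).
  assert (HA : A = e + q ^ n * a) by (unfold A; rewrite Nat.add_comm; apply qint_add).
  assert (He : 0 < e) by (apply qint_pos; [lra | exact Hn]).
  assert (HeA : e <= A) by (unfold A; rewrite Nat.add_comm; apply qint_le_add; lra).
  assert (Hqk : 0 < q ^ k <= 1) by (split; [apply pow_lt | apply pow_le_one]; lra).
  assert (Hqn : 0 < q ^ n) by (apply pow_lt; lra).
  assert (Ha : 0 <= a) by (apply qint_nonneg; lra).
  assert (Hqkn : 0 < q ^ k * q ^ n) by (apply Rmult_lt_0_compat; lra).
  rewrite HSk, HSkn.
  assert (Hdiff : (a + q ^ k) / (A + q ^ k * q ^ n) - a / A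
                  = q ^ k * e / ((A + q ^ k * q ^ n) * A))
    by (rewrite HA in *; field; split; apply Rgt_not_eq; nra).
  assert (Hgap : q ^ k * e / ((A + q ^ k * q ^ n) * A) <= / e).
  { apply Rle_div_l; [apply Rmult_lt_0_compat; lra |].
    apply (Rmult_le_reg_l e); [exact He |].
    rewrite <- (Rmult_assoc e (/ e)), Rinv_r, Rmult_1_l by lra.
    assert (e * e <= (A + q ^ k * q ^ n) * A) by (apply Rmult_le_compat; lra).
    assert (0 <= e * e) by nra.
    nra. }
  lra.
Qed.

Lemma sum_n_S_R (a : nat -> R) (K : nat) : sum_n a (S K) = sum_n a K + a (S K).
Proof. rewrite sum_Sn; reflexivity. Qed.

Lemma is_series_linear_rec (a c : nat -> R) (r L : R) :
  0 <= r < 1 -> (forall k, 0 <= a k) -> (forall k, 0 <= c k) ->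
  a 0%nat = c 0%nat -> (forall k, a (S k) = r * a k + c (S k)) ->
  is_series c L -> is_series a (L / (1 - r)).
Proof.
  intros Hr Ha Hc H0 Hrec HL.
  assert (Hpartial : forall K, sum_n a K * (1 - r) = sum_n c K - r * a K).
  { induction K as [|K IH].
    - rewrite !sum_O, H0; ring.
    - rewrite !sum_n_S_R, Hrec.
      replace ((sum_n a K + (r * a K + c (S K))) * (1 - r))
        with (sum_n a K * (1 - r) + (r * a K + c (S K)) * (1 - r)) by ring.
      rewrite IH; ring. }
  assert (Hcle : forall K, sum_n c K <= L).
  { apply is_lim_seq_incr_compare; [exact HL |].
    intros K; rewrite sum_n_S_R; pose proof (Hc (S K)); lra. }
  assert (Hbounded : ex_finite_lim_seq (sum_n a)).
  { apply ex_finite_lim_seq_incr with (M := L / (1 - r)).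
    - intros K; rewrite sum_n_S_R; pose proof (Ha (S K)); lra.
    - intros K; apply Rle_div_r; [lra |].
      rewrite Hpartial; pose proof (Hcle K); pose proof (Ha K); nra. }
  assert (Hex : ex_series a) by (destruct Hbounded as [l Hl]; exists l; exact Hl).
  change (is_lim_seq (sum_n a) (L / (1 - r))).
  apply is_lim_seq_ext with (fun K => (sum_n c K - r * a K) / (1 - r)).
  - intros K; rewrite <- Hpartial; field; lra.
  - replace (L / (1 - r)) with ((L - r * 0) / (1 - r)) by (f_equal; ring).
    apply is_lim_seq_div'; [| apply is_lim_seq_const | lra].
    apply is_lim_seq_minus'; [exact HL |].
    apply (is_lim_seq_scal_l a r 0), ex_series_lim_0, Hex.
Qed.

Lemma mkz_weight_nonneg (q x : R) (n k : nat) : 0 < q -> 0 <= x -> 0 <= mkz_weight q x n k.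
Proof.
  intros Hq Hx; unfold mkz_weight.
  pose proof (qbinom_add_pos q n k Hq); pose proof (pow_le x k Hx); nra.
Qed.

Lemma qprod_pos (q x : R) (n : nat) : 0 < q <= 1 -> 0 <= x < 1 -> 0 < qprod q x n.
Proof.
  intros Hq Hx; induction n as [|n IH]; simpl; [lra |].
  assert (q ^ S n <= 1) by (apply pow_le_one; lra).
  assert (0 <= q ^ S n) by (apply pow_le; lra).
  apply Rmult_lt_0_compat; [exact IH | simpl in *; nra].
Qed.

Lemma qprod_0 (q : R) (n : nat) : qprod q 0 n = 1.
Proof. induction n as [|n IH]; simpl; [ring | rewrite IH; ring]. Qed.

Lemma is_series_mkz_weight (q x : R) (n : nat) : 0 < q <= 1 -> 0 <= x < 1 ->
  is_series (mkz_weight q x n) (/ qprod q x n).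
Proof.
  intros Hq Hx; induction n as [|n IH].
  - apply is_series_ext with (fun k => x ^ k).
    + intros k; unfold mkz_weight; rewrite qbinom_0_add; lra.
    + apply is_series_geom; rewrite Rabs_right; lra.
  - set (r := q ^ S n * x).
    assert (Hr : 0 <= r < 1).
    { assert (q ^ S n <= 1) by (apply pow_le_one; lra).
      assert (0 <= q ^ S n) by (apply pow_le; lra).
      unfold r; split; nra. }
    replace (/ qprod q x (S n)) with (/ qprod q x n / (1 - r))
      by (pose proof (qprod_pos q x n Hq Hx);
          change (qprod q x (S n)) with (qprod q x n * (1 - r)); field; split; lra).
    apply is_series_linear_rec with (c := mkz_weight q x n); auto.
    + intros k; apply mkz_weight_nonneg; lra.
    + intros k; apply mkz_weight_nonneg; lra.
    + unfold mkz_weight; rewrite !qbinom_add_0; lra.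
    + intros k; unfold mkz_weight, r; rewrite qbinom_pascal by lra; simpl pow; ring.
Qed.

Lemma is_series_mkz_first_moment (q x : R) (n : nat) : 0 < q <= 1 -> 0 <= x < 1 ->
  is_series (fun k => mkz_weight q x n k * mkz_node q n k) (x / qprod q x n).
Proof.
  intros Hq Hx; apply is_series_decr_1.
  rewrite mkz_node_0.
  change (@plus R_NormedModule ?a (@opp R_NormedModule ?b)) with (a - b).
  replace (x / qprod q x n - mkz_weight q x n 0 * 0) with (x * / qprod q x n)
    by (unfold Rdiv; ring).
  apply is_series_ext with (fun k => x * mkz_weight q x n k).
  - intros k; rewrite mkz_weight_node by lra; reflexivity.
  - exact (is_series_scal_l x _ _ (is_series_mkz_weight q x n Hq Hx)).
Qed.

Lemma mkz_second_moment (q x : R) (n : nat) : 0 < q <= 1 -> (1 <= n)%nat -> 0 <= x < 1 ->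
  ex_series (fun k => mkz_weight q x n k * mkz_node q n k ^ 2) /\
  Series (fun k => mkz_weight q x n k * mkz_node q n k ^ 2)
  <= x * (x + / qint q n) / qprod q x n.
Proof.
  intros Hq Hn Hx.
  set (w := mkz_weight q x n); set (t := mkz_node q n).
  set (b := fun k => w k * t k ^ 2).
  set (d := fun k => x * (w k * t k) + x / qint q n * w k).
  pose proof (qprod_pos q x n Hq Hx) as HP; pose proof (qint_pos q n (proj1 Hq) Hn) as He.
  assert (Hd : is_series d (x * (x / qprod q x n) + x / qint q n * / qprod q x n)).
  { exact (is_series_plus _ _ _ _
             (is_series_scal_l x _ _ (is_series_mkz_first_moment q x n Hq Hx))
             (is_series_scal_l (x / qint q n) _ _ (is_series_mkz_weight q x n Hq Hx))). }
  assert (Hbd : forall k, 0 <= b (S k) <= d k).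
  { intros k; unfold b, d.
    assert (Hw : 0 <= w k) by (apply mkz_weight_nonneg; lra).
    assert (Ht : inI (t (S k))) by (apply mkz_node_in_I; lra).
    pose proof (mkz_node_S_le q n k Hq Hn) as Hstep; fold t in Hstep.
    replace (w (S k) * t (S k) ^ 2) with (x * w k * t (S k))
      by (unfold w, t; rewrite <- mkz_weight_node by lra; ring).
    assert (0 <= x * w k) by nra.
    unfold inI in Ht; split; [nra |].
    unfold Rdiv; nra. }
  assert (Hex : ex_series (fun k => b (S k))).
  { apply (@ex_series_le _ R_CompleteNormedModule) with d; [| eexists; exact Hd].
    intros k; change (Rabs (b (S k)) <= d k); rewrite Rabs_pos_eq; apply Hbd. }
  split; [apply ex_series_incr_1, Hex |].
  fold b; rewrite Series_incr_1 by (apply ex_series_incr_1, Hex).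
  unfold b at 1; unfold t; rewrite mkz_node_0.
  assert (Hle : Series (fun k => b (S k)) <= Series d)
    by (apply Series_le; [exact Hbd | eexists; exact Hd]).
  rewrite (is_series_unique d _ Hd) in Hle.
  replace (x * (x + / qint q n) / qprod q x n)
    with (x * (x / qprod q x n) + x / qint q n * / qprod q x n) by (field; lra).
  lra.
Qed.

Lemma mkz_variance (q x : R) (n : nat) : 0 < q <= 1 -> (1 <= n)%nat -> 0 <= x < 1 ->
  exists V, is_series (fun k => mkz_weight q x n k * (mkz_node q n k - x) ^ 2) V /\
            qprod q x n * V <= x / qint q n.
Proof.
  intros Hq Hn Hx.
  destruct (mkz_second_moment q x n Hq Hn Hx) as [Hex2 Hle2].
  set (S2 := Series (fun k => mkz_weight q x n k * mkz_node q n k ^ 2)) in Hle2.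
  pose proof (qprod_pos q x n Hq Hx) as HP; pose proof (qint_pos q n (proj1 Hq) Hn) as He.
  exists (S2 + -2 * x * (x / qprod q x n) + x ^ 2 * / qprod q x n); split.
  - apply is_series_ext with
      (fun k => mkz_weight q x n k * mkz_node q n k ^ 2
                + -2 * x * (mkz_weight q x n k * mkz_node q n k)
                + x ^ 2 * mkz_weight q x n k).
    { intros k; change (NormedModule.sort _ _) with R; ring. }
    exact (is_series_plus _ _ _ _
             (is_series_plus _ _ _ _ (Series_correct _ Hex2)
                (is_series_scal_l (-2 * x) _ _ (is_series_mkz_first_moment q x n Hq Hx)))
             (is_series_scal_l (x ^ 2) _ _ (is_series_mkz_weight q x n Hq Hx))).
  - apply (Rmult_le_compat_l (qprod q x n)) in Hle2; [| lra].
    replace (qprod q x n * (x * (x + / qint q n) / qprod q x n))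
      with (x ^ 2 + x / qint q n) in Hle2 by (field; lra).
    replace (qprod q x n * (S2 + -2 * x * (x / qprod q x n) + x ^ 2 * / qprod q x n))
      with (qprod q x n * S2 - x ^ 2) by (field; lra).
    lra.
Qed.

Lemma MKZ_sub_lt_1 (n : nat) (q : R) (h : R -> R) (x : R) : 0 < q <= 1 -> 0 <= x < 1 ->
  ex_series (fun k => Rabs (mkz_weight q x n k * (h (mkz_node q n k) - h x))) ->
  MKZ n q h x - h x
  = qprod q x n * Series (fun k => mkz_weight q x n k * (h (mkz_node q n k) - h x)).
Proof.
  intros Hq Hx Hex.
  pose proof (qprod_pos q x n Hq Hx) as HP; pose proof (is_series_mkz_weight q x n Hq Hx) as Hw.
  rewrite MKZ_lt_1 by lra.
  replace (h x) with (qprod q x n * Series (fun k => h x * mkz_weight q x n k)) at 1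
    by (rewrite Series_scal_l, (is_series_unique _ _ Hw); field; lra).
  rewrite <- Rmult_minus_distr_l, <- Series_minus.
  - f_equal; apply Series_ext; intros k; ring.
  - eexists; apply is_series_ext with (2 := is_series_plus _ _ _ _
      (Series_correct _ (ex_series_Rabs _ Hex)) (is_series_scal_l (h x) _ _ Hw)).
    intros k; cbn; ring.
  - eexists; exact (is_series_scal_l (h x) _ _ Hw).
Qed.

Lemma MKZ_approx (n : nat) (q : R) (h : R -> R) (eps K x : R) :
  0 < q <= 1 -> (1 <= n)%nat -> 0 <= K ->
  (forall s y, inI s -> inI y -> Rabs (h s - h y) <= eps + K * (s - y) ^ 2) ->
  inI x -> Rabs (MKZ n q h x - h x) <= eps + K / qint q n.
Proof.
  intros Hq Hn HK Hh Hx.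
  pose proof (qint_pos q n (proj1 Hq) Hn) as He.
  assert (Heps : 0 <= eps)
    by (pose proof (Hh x x Hx Hx); pose proof (Rabs_pos (h x - h x));
        replace ((x - x) ^ 2) with 0 in * by ring; lra).
  destruct (Rlt_dec x 1) as [Hx1 | Hx1].
  2:{ replace x with 1 by (unfold inI in Hx; lra).
      rewrite MKZ_1; unfold Rminus; rewrite Rplus_opp_r, Rabs_R0.
      assert (0 <= K / qint q n) by (apply Rdiv_le_0_compat; lra); lra. }
  assert (Hx' : 0 <= x < 1) by (unfold inI in Hx; lra).
  pose proof (qprod_pos q x n Hq Hx') as HP.
  set (w := mkz_weight q x n); set (t := mkz_node q n); set (P := qprod q x n) in *.
  destruct (mkz_variance q x n Hq Hn Hx') as [V [HV HVle]]; fold w t P in HV, HVle.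
  set (d := fun k => w k * (h (t k) - h x)).
  set (m := fun k => eps * w k + K * (w k * (t k - x) ^ 2)).
  assert (Hm : is_series m (eps * / P + K * V))
    by exact (is_series_plus _ _ _ _
                (is_series_scal_l eps _ _ (is_series_mkz_weight q x n Hq Hx'))
                (is_series_scal_l K _ _ HV)).
  assert (Hdm : forall k, Rabs (d k) <= m k).
  { intros k; unfold d, m.
    assert (Hw : 0 <= w k) by (apply mkz_weight_nonneg; lra).
    rewrite Rabs_mult, (Rabs_pos_eq (w k) Hw).
    pose proof (Hh (t k) x (mkz_node_in_I q n k (proj1 Hq)) Hx) as Hk.
    apply (Rmult_le_compat_l (w k)) in Hk; [nra | exact Hw]. }
  assert (Hexd : ex_series (fun k => Rabs (d k))).
  { apply (@ex_series_le _ R_CompleteNormedModule) with m; [| eexists; exact Hm].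
    intros k; change (Rabs (Rabs (d k)) <= m k); rewrite Rabs_Rabsolu; apply Hdm. }
  assert (Hdle : Rabs (Series d) <= eps * / P + K * V).
  { rewrite <- (is_series_unique m _ Hm).
    apply Rle_trans with (1 := Series_Rabs d Hexd), Series_le; [| eexists; exact Hm].
    intros k; split; [apply Rabs_pos | apply Hdm]. }
  rewrite MKZ_sub_lt_1 by assumption; fold w t P d.
  rewrite Rabs_mult, (Rabs_pos_eq P) by lra.
  apply (Rmult_le_compat_l P) in Hdle; [| lra].
  replace (P * (eps * / P + K * V)) with (eps + K * (P * V)) in Hdle by (field; lra).
  assert (K * (P * V) <= K / qint q n).
  { apply Rmult_le_compat_l; [exact HK |].
    apply Rle_trans with (1 := HVle).
    unfold Rdiv; pose proof (Rinv_0_lt_compat _ He); nra. }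
  lra.
Qed.

Lemma MKZ_0 (n : nat) (q : R) (h : R -> R) : 0 < q -> MKZ n q h 0 = h 0.
Proof.
  intros Hq; rewrite MKZ_lt_1, qprod_0, Rmult_1_l by lra.
  apply is_series_unique.
  change (is_lim_seq (sum_n (fun k => mkz_weight q 0 n k * h (mkz_node q n k))) (h 0)).
  apply is_lim_seq_ext with (fun _ => h 0); [| apply is_lim_seq_const].
  intros K; induction K as [|K IH].
  - rewrite sum_O; unfold mkz_weight; rewrite qbinom_add_0, mkz_node_0 by exact Hq; simpl; ring.
  - rewrite sum_n_S_R, <- IH; unfold mkz_weight; simpl; ring.
Qed.

(* Composing with the clamp extends h from I to a function continuous on R, to which
   Stdlib's compactness theorems apply. *)
Definition clamp01 (x : R) : R := Rmax 0 (Rmin 1 x).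

Lemma clamp01_in_I (x : R) : inI (clamp01 x).
Proof.
  unfold clamp01, inI; split; [apply Rmax_l |].
  apply Rmax_lub; [lra | apply Rmin_l].
Qed.

Lemma clamp01_id (x : R) : inI x -> clamp01 x = x.
Proof.
  unfold clamp01, inI; intros Hx.
  rewrite Rmin_right, Rmax_right by lra; reflexivity.
Qed.

Lemma clamp01_lipschitz (x y : R) : Rabs (clamp01 x - clamp01 y) <= Rabs (x - y).
Proof.
  unfold clamp01, Rmax, Rmin; repeat destruct Rle_dec;
    apply Rabs_le; pose proof (Rle_abs (x - y)); pose proof (Rle_abs (- (x - y)));
    rewrite Rabs_Ropp in *; lra.
Qed.

Lemma cont_on_I_clamp01 (h : R -> R) : cont_on_I h ->
  forall x, continuity_pt (fun y => h (clamp01 y)) x.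
Proof.
  intros Hh x eps Heps.
  destruct (Hh _ (clamp01_in_I x) eps Heps) as [d [Hd Hclose]].
  exists d; split; [exact Hd |]; intros y [_ Hy]; simpl in *; unfold R_dist in *.
  apply Hclose; [apply clamp01_in_I |].
  pose proof (clamp01_lipschitz y x); lra.
Qed.

Lemma cont_on_I_bounded (h : R -> R) : cont_on_I h ->
  exists B, forall t, inI t -> Rabs (h t) <= B.
Proof.
  intros Hh.
  destruct (continuity_ab_maj (fun x => Rabs (h (clamp01 x))) 0 1) as [M [HM _]]; [lra | |].
  - intros x _; apply (continuity_pt_comp (fun y => h (clamp01 y)) Rabs);
      [apply cont_on_I_clamp01, Hh | apply Rcontinuity_abs].
  - exists (Rabs (h (clamp01 M))); intros t Ht.
    rewrite <- (clamp01_id t Ht); apply HM, Ht.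
Qed.

Lemma cont_on_I_unif (h : R -> R) : cont_on_I h ->
  forall eps, 0 < eps -> exists d, 0 < d /\
    forall s y, inI s -> inI y -> Rabs (s - y) < d -> Rabs (h s - h y) < eps.
Proof.
  intros Hh eps Heps.
  destruct (Heine (fun y => h (clamp01 y)) (fun c => 0 <= c <= 1) (compact_P3 0 1)
              (fun x _ => cont_on_I_clamp01 h Hh x) (mkposreal eps Heps)) as [d Hd].
  exists d; split; [apply cond_pos |]; intros s y Hs Hy Hsy.
  pose proof (Hd s y Hs Hy Hsy) as Hclamped; simpl in Hclamped.
  rewrite !clamp01_id in Hclamped by assumption; exact Hclamped.
Qed.

Lemma cont_on_I_quadratic_modulus (h : R -> R) : cont_on_I h ->
  forall eps, 0 < eps -> exists K, 0 <= K /\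
    forall s y, inI s -> inI y -> Rabs (h s - h y) <= eps + K * (s - y) ^ 2.
Proof.
  intros Hh eps Heps.
  destruct (cont_on_I_bounded h Hh) as [B HB].
  destruct (cont_on_I_unif h Hh eps Heps) as [d [Hd Hclose]].
  assert (HB0 : 0 <= B)
    by (pose proof (HB 0 ltac:(unfold inI; lra)); pose proof (Rabs_pos (h 0)); lra).
  exists (2 * B / (d * d)); split; [apply Rdiv_le_0_compat; nra |].
  intros s y Hs Hy.
  assert (Hquad : 0 <= 2 * B / (d * d) * (s - y) ^ 2)
    by (apply Rmult_le_pos; [apply Rdiv_le_0_compat; nra | apply pow2_ge_0]).
  destruct (Rlt_dec (Rabs (s - y)) d) as [Hnear | Hfar].
  - pose proof (Hclose s y Hs Hy Hnear); lra.
  - assert (Hsq : d * d <= (s - y) ^ 2)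
      by (rewrite <- pow2_abs; simpl; rewrite Rmult_1_r; apply Rmult_le_compat; lra).
    assert (2 * B <= 2 * B / (d * d) * (s - y) ^ 2).
    { replace (2 * B) with (2 * B / (d * d) * (d * d)) at 1 by (field; lra).
      apply Rmult_le_compat_l; [apply Rdiv_le_0_compat; nra | exact Hsq]. }
    pose proof (Rabs_triang (h s) (- h y)); rewrite Rabs_Ropp in *.
    pose proof (HB s Hs); pose proof (HB y Hy); unfold Rminus; lra.
Qed.

Lemma pow_ge_bernoulli (q : R) (i : nat) : 0 <= q <= 1 -> 1 - INR i * (1 - q) <= q ^ i.
Proof.
  intros Hq; induction i as [|i IH]; [simpl; lra |].
  rewrite S_INR; change (q ^ S i) with (q * q ^ i); pose proof (pos_INR i).
  assert (q * (1 - INR i * (1 - q)) <= q * q ^ i) by (apply Rmult_le_compat_l; lra).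
  assert (0 <= INR i * ((1 - q) * (1 - q))) by (apply Rmult_le_pos; nra).
  nra.
Qed.

Lemma qint_ge_bernoulli (q : R) (m : nat) : 0 < q <= 1 ->
  INR m * (1 - INR m * (1 - q)) <= qint q m.
Proof.
  intros Hq; induction m as [|m IH]; [rewrite qint_0; simpl; lra |].
  rewrite qint_S, S_INR; pose proof (pow_ge_bernoulli q m ltac:(lra)); pose proof (pos_INR m).
  nra.
Qed.

Lemma qint_unbounded (q : nat -> R) : (forall n, 0 < q n <= 1) -> is_lim_seq q 1 ->
  forall L, exists n, (1 <= n)%nat /\ L <= qint (q n) n.
Proof.
  intros Hq Hlim L.
  destruct (INR_archimed 1 (2 * L) ltac:(lra)) as [m0 Hm0].
  set (m := S m0).
  assert (Hm : 2 * L <= INR m) by (unfold m; rewrite S_INR; lra).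
  assert (Hm0' : 0 < INR m) by (apply lt_0_INR; unfold m; lia).
  apply is_lim_seq_Reals in Hlim.
  destruct (Hlim (/ (2 * INR m))) as [n0 Hn0]; [apply Rinv_0_lt_compat; lra |].
  set (n := Nat.max n0 m).
  exists n; split; [unfold n, m; lia |].
  specialize (Hn0 n ltac:(unfold n; lia)); unfold R_dist in Hn0.
  pose proof (Hq n) as Hqn; rewrite Rabs_left1 in Hn0 by lra.
  assert (Hclose : INR m * (1 - q n) <= / 2).
  { replace (/ 2) with (INR m * / (2 * INR m)) by (field; lra).
    apply Rmult_le_compat_l; lra. }
  pose proof (qint_ge_bernoulli (q n) m Hqn).
  pose proof (qint_le_add (q n) m (n - m) (proj1 Hqn)) as Hmono.
  replace (m + (n - m))%nat with n in Hmono by (unfold n; lia).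
  nra.
Qed.

Lemma MKZ_uniform_approx (q : nat -> R) (h : R -> R) :
  (forall n, 0 < q n <= 1) -> is_lim_seq q 1 -> cont_on_I h ->
  forall eta, 0 < eta -> exists n, (1 <= n)%nat /\
    forall t, inI t -> Rabs (h t - MKZ n (q n) h t) <= eta.
Proof.
  intros Hq Hlim Hh eta Heta.
  destruct (cont_on_I_quadratic_modulus h Hh (eta / 2) ltac:(lra)) as [K [HK Hmod]].
  destruct (qint_unbounded q Hq Hlim (2 * K / eta)) as [n [Hn Hlarge]].
  pose proof (qint_pos (q n) n (proj1 (Hq n)) Hn) as He.
  exists n; split; [exact Hn |]; intros t Ht.
  rewrite Rabs_minus_sym.
  apply Rle_trans with (1 := MKZ_approx n (q n) h (eta / 2) K t (Hq n) Hn HK Hmod Ht).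
  assert (K / qint (q n) n <= eta / 2).
  { apply Rle_div_l; [exact He |].
    apply (Rmult_le_compat_r (eta / 2)) in Hlarge; [| lra].
    replace (2 * K / eta * (eta / 2)) with K in Hlarge by (field; lra).
    lra. }
  lra.
Qed.

Lemma le_of_le_geometric (a b c B : R) : 0 <= c < 1 ->
  (forall k, a <= c ^ k * B + b) -> a <= b.
Proof.
  intros Hc Hk.
  assert (Hlim : is_lim_seq (fun k => c ^ k * B + b) (0 * B + b)).
  { apply is_lim_seq_plus'; [| apply is_lim_seq_const].
    apply is_lim_seq_mult'; [apply is_lim_seq_geom; rewrite Rabs_pos_eq; lra |].
    apply is_lim_seq_const. }
  pose proof (is_lim_seq_le _ _ _ _ Hk (is_lim_seq_const a) Hlim) as H; simpl in H; lra.
Qed.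

Section Contraction.

Variables (P : R -> Prop) (T : (R -> R) -> R -> R) (g0 : R -> R) (c D : R).
Hypothesis Hc : 0 <= c < 1.
Hypothesis HD : 0 <= D.
Hypothesis Hstart : forall y, P y -> Rabs (T g0 y - g0 y) <= D.
Hypothesis Hcontr : forall g g' d, (forall y, P y -> Rabs (g y - g' y) <= d) ->
  forall y, P y -> Rabs (T g y - T g' y) <= c * d.

Let picard (k : nat) : R -> R := Nat.iter k T g0.

Lemma picard_step (k : nat) (y : R) : P y -> Rabs (picard (S k) y - picard k y) <= D * c ^ k.
Proof.
  revert y; induction k as [|k IH]; intros y Hy.
  - simpl; rewrite Rmult_1_r; apply Hstart, Hy.
  - replace (D * c ^ S k) with (c * (D * c ^ k)) by (simpl; ring).
    apply (Hcontr (picard (S k)) (picard k)); [exact IH | exact Hy].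
Qed.

Lemma picard_tail (k p : nat) (y : R) : P y ->
  Rabs (picard (p + k) y - picard k y) <= D * c ^ k * (1 - c ^ p) / (1 - c).
Proof.
  intros Hy; induction p as [|p IH].
  - simpl; unfold Rminus; rewrite Rplus_opp_r, Rabs_R0; unfold Rdiv; lra.
  - replace (picard (S p + k) y - picard k y)
      with ((picard (S (p + k)) y - picard (p + k) y) + (picard (p + k) y - picard k y))
      by (simpl; ring).
    eapply Rle_trans; [apply Rabs_triang |].
    pose proof (picard_step (p + k) y Hy) as Hstep; rewrite pow_add in Hstep.
    replace (D * c ^ k * (1 - c ^ S p) / (1 - c))
      with (D * (c ^ p * c ^ k) + D * c ^ k * (1 - c ^ p) / (1 - c)) by (simpl; field; lra).
    lra.
Qed.

Lemma picard_tail_le (k m : nat) (y : R) : (k <= m)%nat -> P y ->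
  Rabs (picard m y - picard k y) <= D * c ^ k / (1 - c).
Proof.
  intros Hkm Hy.
  replace m with ((m - k) + k)%nat by lia.
  eapply Rle_trans; [apply picard_tail, Hy |].
  assert (0 <= c ^ (m - k)) by (apply pow_le; lra).
  assert (0 <= D * c ^ k) by (apply Rmult_le_pos; [exact HD | apply pow_le; lra]).
  unfold Rdiv; apply Rmult_le_compat_r; [left; apply Rinv_0_lt_compat; lra | nra].
Qed.

Lemma picard_cauchy (y : R) : P y -> ex_finite_lim_seq (fun k => picard k y).
Proof.
  intros Hy; apply ex_lim_seq_cauchy_corr; intros eps.
  assert (Htarget : 0 < eps * (1 - c) / (2 * (D + 1)))
    by (apply Rdiv_lt_0_compat; [apply Rmult_lt_0_compat; [apply cond_pos | lra] | lra]).
  destruct (pow_lt_1_zero c ltac:(rewrite Rabs_pos_eq; lra) _ Htarget) as [N HN].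
  exists N; intros n m Hn Hm.
  specialize (HN N (le_n N)); rewrite Rabs_pos_eq in HN by (apply pow_le; lra).
  assert (Hsmall : D * c ^ N / (1 - c) < eps / 2).
  { apply Rle_lt_trans with ((D + 1) * c ^ N / (1 - c)).
    - unfold Rdiv; apply Rmult_le_compat_r; [left; apply Rinv_0_lt_compat; lra |].
      assert (0 <= c ^ N) by (apply pow_le; lra); nra.
    - apply Rlt_div_l; [lra |].
      apply (Rmult_lt_compat_l (D + 1)) in HN; [| lra].
      replace ((D + 1) * (eps * (1 - c) / (2 * (D + 1)))) with (eps / 2 * (1 - c)) in HN
        by (field; lra).
      exact HN. }
  pose proof (picard_tail_le N n y Hn Hy); pose proof (picard_tail_le N m y Hm Hy).
  replace (picard n y - picard m y)
    with ((picard n y - picard N y) - (picard m y - picard N y)) by ring.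
  eapply Rle_lt_trans; [apply Rabs_triang |]; rewrite Rabs_Ropp; lra.
Qed.

Let picard_lim (y : R) : R := real (Lim_seq (fun k => picard k y)).

Lemma is_lim_seq_picard (y : R) : P y -> is_lim_seq (fun k => picard k y) (picard_lim y).
Proof.
  intros Hy; destruct (picard_cauchy y Hy) as [l Hl].
  unfold picard_lim; rewrite (is_lim_seq_unique _ _ Hl); exact Hl.
Qed.

Lemma picard_lim_dist (k : nat) (y : R) : P y ->
  Rabs (picard_lim y - picard k y) <= D * c ^ k / (1 - c).
Proof.
  intros Hy.
  assert (Hlim : is_lim_seq (fun m => Rabs (picard (m + k) y - picard k y))
                            (Rabs (picard_lim y - picard k y))).
  { apply (is_lim_seq_abs _ (Finite (picard_lim y - picard k y))).
    apply is_lim_seq_minus'; [| apply is_lim_seq_const].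
    apply (is_lim_seq_incr_n (fun m => picard m y)), is_lim_seq_picard, Hy. }
  refine (is_lim_seq_le _ _ _ _ _ Hlim (is_lim_seq_const _)).
  intros m; apply picard_tail_le; [lia | exact Hy].
Qed.

Lemma contraction_fixpoint : exists G,
  (forall y, P y -> Rabs (G y - g0 y) <= D / (1 - c)) /\
  (forall y, P y -> T G y = G y).
Proof.
  exists picard_lim; split.
  - intros y Hy; pose proof (picard_lim_dist 0 y Hy) as H; simpl in H.
    rewrite Rmult_1_r in H; exact H.
  - intros y Hy.
    assert (Hk : forall k, Rabs (T picard_lim y - picard_lim y)
                           <= c ^ k * (2 * c * D / (1 - c)) + 0).
    { intros k.
      pose proof (Hcontr picard_lim (picard k) _ (fun z Hz => picard_lim_dist k z Hz) y Hy)
        as Himage.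
      pose proof (picard_lim_dist (S k) y Hy) as Hnext.
      replace (T picard_lim y - picard_lim y)
        with ((T picard_lim y - picard (S k) y) - (picard_lim y - picard (S k) y)) by ring.
      eapply Rle_trans; [apply Rabs_triang |]; rewrite Rabs_Ropp.
      replace (c ^ k * (2 * c * D / (1 - c)) + 0)
        with (c * (D * c ^ k / (1 - c)) + D * c ^ S k / (1 - c)) by (simpl; field; lra).
      exact (Rplus_le_compat _ _ _ _ Himage Hnext). }
    pose proof (le_of_le_geometric _ _ _ _ Hc Hk).
    pose proof (Rabs_pos (T picard_lim y - picard_lim y)).
    apply Rminus_diag_uniq, Rabs_eq_0; lra.
Qed.

End Contraction.

(* [is_fractal N xs alpha q n h] is [fractal_eq N xs alpha h (MKZ n q h)]; of the operator only
   M = h at 0 and 1 and a bound on h - M are used. *)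
Definition fractal_eq (N : nat) (xs : nat -> R) (alpha : nat -> R -> R)
  (h M G : R -> R) : Prop :=
  (exists B, forall t, inI t -> Rabs (G t) <= B) /\
  (forall i t, (1 <= i <= N - 1)%nat -> inI t ->
     G (uaff xs i t) = h (uaff xs i t) + alpha i t * (G t - M t)).

Section Partition.

Variables (N : nat) (xs : nat -> R).
Hypothesis HN : (2 <= N)%nat.
Hypothesis Hx1 : xs 1%nat = 0.
Hypothesis HxN : xs N = 1.
Hypothesis Hinc : forall i, (1 <= i < N)%nat -> xs i < xs (S i).

Lemma xs_le (i j : nat) : (1 <= i)%nat -> (i <= j <= N)%nat -> xs i <= xs j.
Proof.
  intros Hi [Hij HjN]; induction Hij as [| j Hij IH]; [lra |].
  pose proof (Hinc j ltac:(lia)); pose proof (IH ltac:(lia)); lra.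
Qed.

Lemma uaff_bounds (i : nat) (t : R) : (1 <= i <= N - 1)%nat -> inI t ->
  xs i <= uaff xs i t <= xs (S i).
Proof.
  intros Hi Ht; pose proof (Hinc i ltac:(lia)); unfold uaff, inI in *; split; nra.
Qed.

Lemma uaff_in_I (i : nat) (t : R) : (1 <= i <= N - 1)%nat -> inI t -> inI (uaff xs i t).
Proof.
  intros Hi Ht; pose proof (uaff_bounds i t Hi Ht).
  pose proof (xs_le 1 i ltac:(lia) ltac:(lia)); pose proof (xs_le (S i) N ltac:(lia) ltac:(lia)).
  unfold inI; lra.
Qed.

Lemma uaff_eq_left (i : nat) (t : R) : (1 <= i <= N - 1)%nat ->
  uaff xs i t = xs i -> t = 0.
Proof.
  intros Hi Hu; pose proof (Hinc i ltac:(lia)); unfold uaff in Hu.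
  apply (Rmult_eq_reg_l (xs (S i) - xs i)); lra.
Qed.

Lemma uaff_eq_right (i : nat) (t : R) : (1 <= i <= N - 1)%nat ->
  uaff xs i t = xs (S i) -> t = 1.
Proof.
  intros Hi Hu; pose proof (Hinc i ltac:(lia)); unfold uaff in Hu.
  apply (Rmult_eq_reg_l (xs (S i) - xs i)); lra.
Qed.

Lemma partition_cover (y : R) : inI y ->
  exists i, (1 <= i <= N - 1)%nat /\ xs i <= y <= xs (S i).
Proof.
  intros Hy.
  assert (Hk : forall k, (1 <= k <= N - 1)%nat -> y <= xs (S k) ->
            exists i, (1 <= i <= k)%nat /\ xs i <= y <= xs (S i)).
  { induction k as [|k IH]; intros Hk Hyk; [lia |].
    destruct (Nat.eq_dec k 0) as [-> | Hk0].
    - exists 1%nat; unfold inI in Hy; split; [lia | lra].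
    - destruct (Rle_dec y (xs (S k))) as [Hle | Hgt].
      + destruct (IH ltac:(lia) Hle) as [i [Hi Hyi]]; exists i; split; [lia | exact Hyi].
      + exists (S k); split; [lia | lra]. }
  destruct (Hk (N - 1)%nat ltac:(lia)) as [i [Hi Hyi]].
  - replace (S (N - 1)) with N by lia; unfold inI in Hy; lra.
  - exists i; split; [lia | exact Hyi].
Qed.

Lemma uaff_surj (y : R) : inI y ->
  exists i t, (1 <= i <= N - 1)%nat /\ inI t /\ uaff xs i t = y.
Proof.
  intros Hy; destruct (partition_cover y Hy) as [i [Hi Hyi]].
  pose proof (Hinc i ltac:(lia)).
  exists i, ((y - xs i) / (xs (S i) - xs i)); split; [exact Hi | split].
  - unfold inI; split; [apply Rdiv_le_0_compat; lra | apply Rle_div_l; lra].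
  - unfold uaff; field; lra.
Qed.

Lemma uaff_inj (i j : nat) (t s : R) :
  (1 <= i <= N - 1)%nat -> inI t -> (1 <= j <= N - 1)%nat -> inI s ->
  uaff xs i t = uaff xs j s ->
  (i = j /\ t = s) \/ ((t = 0 \/ t = 1) /\ (s = 0 \/ s = 1)).
Proof.
  intros Hi Ht Hj Hs Hu.
  pose proof (uaff_bounds i t Hi Ht); pose proof (uaff_bounds j s Hj Hs).
  destruct (Compare_dec.lt_eq_lt_dec i j) as [[Hlt | ->] | Hgt].
  - pose proof (xs_le (S i) j ltac:(lia) ltac:(lia)).
    right; split; [right; apply (uaff_eq_right i) | left; apply (uaff_eq_left j)]; auto; lra.
  - left; split; [reflexivity |].
    pose proof (Hinc j ltac:(lia)); unfold uaff in Hu.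
    apply (Rmult_eq_reg_l (xs (S j) - xs j)); lra.
  - pose proof (xs_le (S j) i ltac:(lia) ltac:(lia)).
    right; split; [left; apply (uaff_eq_left i) | right; apply (uaff_eq_right j)]; auto; lra.
Qed.

Section ReadBajraktarevic.

Variables (alpha : nat -> R -> R) (h M : R -> R) (c eta Bh : R).
Hypothesis Hc : 0 <= c < 1.
Hypothesis Halpha : forall i t, (1 <= i <= N - 1)%nat -> inI t -> Rabs (alpha i t) <= c.
Hypothesis Hh : forall t, inI t -> Rabs (h t) <= Bh.
Hypothesis HhM : forall t, inI t -> Rabs (h t - M t) <= eta.
Hypothesis HM0 : M 0 = h 0.
Hypothesis HM1 : M 1 = h 1.

Definition chart (y : R) : nat * R :=
  epsilon (inhabits (0%nat, 0))
    (fun p => (1 <= fst p <= N - 1)%nat /\ inI (snd p) /\ uaff xs (fst p) (snd p) = y).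

Lemma chart_spec (y : R) : inI y ->
  (1 <= fst (chart y) <= N - 1)%nat /\ inI (snd (chart y)) /\
  uaff xs (fst (chart y)) (snd (chart y)) = y.
Proof.
  intros Hy; unfold chart; apply epsilon_spec.
  destruct (uaff_surj y Hy) as [i [t Hit]]; exists (i, t); exact Hit.
Qed.

Definition rb_operator (g : R -> R) (y : R) : R :=
  h y + alpha (fst (chart y)) (snd (chart y)) * (g (snd (chart y)) - M (snd (chart y))).

Lemma rb_operator_contraction (g g' : R -> R) (d : R) :
  (forall y, inI y -> Rabs (g y - g' y) <= d) ->
  forall y, inI y -> Rabs (rb_operator g y - rb_operator g' y) <= c * d.
Proof.
  intros Hgg' y Hy; destruct (chart_spec y Hy) as [Hi [Ht _]].
  unfold rb_operator.
  replace (_ - _) with (alpha (fst (chart y)) (snd (chart y))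
                        * (g (snd (chart y)) - g' (snd (chart y)))) by ring.
  rewrite Rabs_mult; apply Rmult_le_compat; auto using Rabs_pos.
Qed.

Lemma rb_operator_start (y : R) : inI y -> Rabs (rb_operator h y - h y) <= eta.
Proof.
  intros Hy; destruct (chart_spec y Hy) as [Hi [Ht _]].
  unfold rb_operator.
  replace (_ - h y) with (alpha (fst (chart y)) (snd (chart y))
                          * (h (snd (chart y)) - M (snd (chart y)))) by ring.
  rewrite Rabs_mult.
  pose proof (Halpha _ _ Hi Ht); pose proof (HhM _ Ht);
    pose proof (Rabs_pos (alpha (fst (chart y)) (snd (chart y))));
    pose proof (Rabs_pos (h (snd (chart y)) - M (snd (chart y)))).
  nra.
Qed.

Lemma rb_fixpoint_endpoints (G : R -> R) :
  (forall y, inI y -> rb_operator G y = G y) ->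
  forall s, s = 0 \/ s = 1 -> G s = M s.
Proof.
  intros HG s Hs.
  assert (HsI : inI s) by (unfold inI; lra).
  destruct (chart_spec s HsI) as [Hi [Ht Hu]].
  assert (Hchart : snd (chart s) = s).
  { destruct Hs as [Hs | Hs].
    - rewrite Hs at 2; apply (uaff_eq_left (fst (chart s))); [exact Hi |].
      pose proof (uaff_bounds _ _ Hi Ht).
      pose proof (xs_le 1 (fst (chart s)) ltac:(lia) ltac:(lia)).
      lra.
    - rewrite Hs at 2; apply (uaff_eq_right (fst (chart s))); [exact Hi |].
      pose proof (uaff_bounds _ _ Hi Ht).
      pose proof (xs_le (S (fst (chart s))) N ltac:(lia) ltac:(lia)).
      lra. }
  assert (HMs : M s = h s) by (destruct Hs as [-> | ->]; assumption).
  pose proof (HG s HsI) as Hfix; unfold rb_operator in Hfix; rewrite Hchart, HMs in Hfix.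
  pose proof (Halpha _ _ Hi Ht) as Ha; rewrite Hchart in Ha.
  assert (Hzero : (1 - alpha (fst (chart s)) s) * (G s - h s) = 0) by lra.
  apply Rmult_integral in Hzero as [Hzero | Hzero]; [| lra].
  apply Rabs_le_between in Ha; lra.
Qed.

Lemma rb_fixpoint_fractal_eq (G : R -> R) :
  (forall y, inI y -> Rabs (G y - h y) <= eta / (1 - c)) ->
  (forall y, inI y -> rb_operator G y = G y) ->
  fractal_eq N xs alpha h M G.
Proof.
  intros Hbound HG; split.
  - exists (Bh + eta / (1 - c)); intros t Ht.
    pose proof (Hbound t Ht); pose proof (Hh t Ht).
    pose proof (Rabs_triang (G t - h t) (h t)).
    replace (G t - h t + h t) with (G t) in * by ring; lra.
  - intros i t Hi Ht.
    pose proof (uaff_in_I i t Hi Ht) as Hy.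
    rewrite <- (HG _ Hy); unfold rb_operator.
    destruct (chart_spec _ Hy) as [Hi' [Ht' Hu']].
    (* Two charts of the same point (a node) have parameters in {0, 1}, where G = M. *)
    destruct (uaff_inj _ _ _ _ Hi' Ht' Hi Ht Hu') as [[-> ->] | [Hend' Hend]]; [reflexivity |].
    rewrite (rb_fixpoint_endpoints G HG _ Hend'), (rb_fixpoint_endpoints G HG _ Hend); ring.
Qed.

Lemma fractal_eq_exists : exists G, fractal_eq N xs alpha h M G.
Proof.
  assert (Heta : 0 <= eta)
    by (pose proof (HhM 0 ltac:(unfold inI; lra)); pose proof (Rabs_pos (h 0 - M 0)); lra).
  destruct (contraction_fixpoint inI rb_operator h c eta Hc Heta rb_operator_start
              rb_operator_contraction) as [G [Hbound HG]].
  exists G; apply rb_fixpoint_fractal_eq; assumption.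
Qed.

Lemma fractal_eq_close (G : R -> R) : fractal_eq N xs alpha h M G ->
  forall y, inI y -> Rabs (G y - h y) <= eta * c / (1 - c).
Proof.
  intros [[BG HBG] HG].
  assert (Heta : 0 <= eta)
    by (pose proof (HhM 0 ltac:(unfold inI; lra)); pose proof (Rabs_pos (h 0 - M 0)); lra).
  assert (Hk : forall k y, inI y -> Rabs (G y - h y) <= c ^ k * (BG + Bh) + eta * c / (1 - c)).
  { induction k as [|k IH]; intros y Hy.
    - pose proof (HBG y Hy); pose proof (Hh y Hy); pose proof (Rabs_triang (G y) (- h y)).
      rewrite Rabs_Ropp in *.
      assert (0 <= eta * c / (1 - c)) by (apply Rdiv_le_0_compat; [apply Rmult_le_pos |]; lra).
      rewrite pow_O; unfold Rminus in *; lra.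
    - destruct (uaff_surj y Hy) as [i [t [Hi [Ht <-]]]].
      rewrite HG by assumption.
      replace (_ - _) with (alpha i t * ((G t - h t) + (h t - M t))) by ring.
      rewrite Rabs_mult.
      pose proof (IH t Ht); pose proof (HhM t Ht); pose proof (Halpha i t Hi Ht).
      pose proof (Rabs_triang (G t - h t) (h t - M t)).
      apply Rle_trans with (c * (c ^ k * (BG + Bh) + eta * c / (1 - c) + eta)).
      + apply Rmult_le_compat; auto using Rabs_pos; lra.
      + right; simpl; field; lra. }
  intros y Hy; apply (le_of_le_geometric _ _ c (BG + Bh)); [exact Hc |].
  intros k; apply Hk, Hy.
Qed.

End ReadBajraktarevic.

End Partition.

Lemma uniform_contraction_bound (alpha : nat -> R -> R) (m : nat) :
  (forall i, (1 <= i <= m)%nat ->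
     exists c, c < 1 /\ forall t, inI t -> Rabs (alpha i t) <= c) ->
  exists c, 0 <= c < 1 /\
    forall i t, (1 <= i <= m)%nat -> inI t -> Rabs (alpha i t) <= c.
Proof.
  induction m as [|m IH]; intros Hbound.
  - exists 0; split; [lra | intros; lia].
  - destruct IH as [c1 [Hc1 H1]]; [intros i Hi; apply Hbound; lia |].
    destruct (Hbound (S m) ltac:(lia)) as [c2 [Hc2 H2]].
    exists (Rmax c1 c2); split.
    + pose proof (Rmax_l c1 c2); split; [lra | apply Rmax_lub_lt; lra].
    + intros i t Hi Ht; destruct (Nat.eq_dec i (S m)) as [-> | Hne].
      * pose proof (H2 t Ht); pose proof (Rmax_r c1 c2); lra.
      * pose proof (H1 i t ltac:(lia) Ht); pose proof (Rmax_l c1 c2); lra.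
Qed.

Theorem theorem5p3 (N : nat) (xs : nat -> R) (q : nat -> R)
  (alpha : nat -> R -> R) (f : nat -> R -> R) :
  (2 <= N)%nat ->
  xs 1%nat = 0 -> xs N = 1 ->
  (forall i, (1 <= i < N)%nat -> xs i < xs (S i)) ->
  (forall n, 0 < q n <= 1) ->
  is_lim_seq q (Finite 1) ->
  (forall i, (1 <= i <= N - 1)%nat ->
     exists c, c < 1 /\ forall t, inI t -> Rabs (alpha i t) <= c) ->
  (forall s, cont_on_I (f s)) ->
  (forall g, cont_on_I g -> forall eps, 0 < eps ->
     exists s, forall t, inI t -> Rabs (f s t - g t) < eps) ->
  forall g, cont_on_I g -> forall eps, 0 < eps ->
    exists n, (1 <= n)%nat /\
    exists (m : nat) (c : nat -> R) (idx : nat -> nat),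
      forall t, inI t ->
        Rabs (g t - sum_n (fun j => c j * fractal N xs alpha (q n) n (f (idx j)) t) m)
        < eps.
Proof.
  intros HN Hx1 HxN Hinc Hq Hlim Halpha Hf Hdense g Hg eps Heps.
  destruct (uniform_contraction_bound alpha (N - 1) Halpha) as [c [Hc Hac]].
  destruct (Hdense g Hg (eps / 2) ltac:(lra)) as [s Hs].
  set (eta := eps * (1 - c) / 4).
  destruct (MKZ_uniform_approx q (f s) Hq Hlim (Hf s) eta) as [n [Hn HMKZ]];
    [unfold eta; apply Rdiv_lt_0_compat; [apply Rmult_lt_0_compat |]; lra |].
  destruct (cont_on_I_bounded (f s) (Hf s)) as [Bh HBh].
  set (F := fractal N xs alpha (q n) n (f s)).
  assert (HF : fractal_eq N xs alpha (f s) (MKZ n (q n) (f s)) F).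
  { apply (epsilon_spec (inhabits (fun _ : R => 0)) (is_fractal N xs alpha (q n) n (f s))).
    exact (fractal_eq_exists N xs HN Hx1 HxN Hinc alpha (f s) (MKZ n (q n) (f s)) c eta Bh
             Hc Hac HBh HMKZ (MKZ_0 n (q n) (f s) (proj1 (Hq n))) (MKZ_1 n (q n) (f s))). }
  pose proof (fractal_eq_close N xs HN Hx1 HxN Hinc alpha (f s) (MKZ n (q n) (f s)) c eta Bh
                Hc Hac HBh HMKZ F HF) as Hclose.
  exists n; split; [exact Hn |].
  exists 0%nat, (fun _ => 1), (fun _ => s); intros t Ht.
  rewrite sum_O, Rmult_1_l; fold F.
  assert (Hfrac : eta * c / (1 - c) <= eps / 4).
  { replace (eta * c / (1 - c)) with (eps * c / 4) by (unfold eta; field; lra).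
    unfold Rdiv; nra. }
  pose proof (Hs t Ht); pose proof (Hclose t Ht).
  replace (g t - F t) with (- (f s t - g t) - (F t - f s t)) by ring.
  eapply Rle_lt_trans; [apply Rabs_triang |]; rewrite !Rabs_Ropp; lra.
Qed.
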